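(* Let $(Q,\rightarrow)$ be a finite transition system. Let $\mathscr{U}$ be a preorder on $Q$ and $\mathscr{R}\subseteq\mathscr{U}$ a preorder with $\mathscr{R}\circ\rightarrow^{-1}\subseteq\rightarrow^{-1}\circ\mathscr{U}$. Let $\mathscr{P}$ be the coarsest equivalence relation with $\mathscr{P}\subseteq\mathscr{R}$ and $\mathscr{P}\circ\rightarrow^{-1}\subseteq\rightarrow^{-1}\circ\mathscr{R}$. Let $\mathit{NotRel}=\mathscr{U}\setminus\mathscr{R}$ and $\mathscr{V}=\mathscr{R}\setminus\mathit{NotRel}'$ where $$\mathit{NotRel}'=\bigcup\{[c]_{\mathscr{P}}\times[d]_{\mathscr{P}} \mid b,c,d\in Q,\ c\rightarrow b,\ c\,\mathscr{R}\,d,\ d\in\rightarrow^{-1}(\mathit{NotRel}(b)),\ d\notin\rightarrow^{-1}(\mathscr{R}(b))\}.$$ Then: 1. $\mathit{NotRel}'=X$ where $X=\{(c,d)\mid \exists b\in Q:\ c\rightarrow_{\mathscr{R}}b,\ c\,\mathscr{R}\,d,\ d\in\rightarrow_{\mathscr{R}}^{-1}(\mathit{NotRel}(b)),\ d\notin\rightarrow_{\mathscr{R}}^{-1}(\mathscr{R}(b))\}$; 2. every simulation $\mathscr{S}\subseteq\mathscr{R}$ satisfies $\mathscr{S}\subseteq\mathscr{V}$; 3. $\mathscr{V}\circ\rightarrow^{-1}\subseteq\rightarrow^{-1}\circ\mathscr{R}$; 4. $\mathscr{V}$ is a preorder; 5. $\mathscr{V}$ is $\mathscr{R}$-stable, i.e.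 $\mathscr{V}\subseteq\mathscr{R}$ is a preorder with $\mathscr{V}\circ\rightarrow^{-1}\subseteq\rightarrow^{-1}\circ\mathscr{R}$; 6. the blocks of $\mathscr{V}$ are exactly the blocks of $\mathscr{P}$ (i.e. $\{[q]_{\mathscr{V}}\mid q\in Q\}=\{[q]_{\mathscr{P}}\mid q\in Q\}$).
   Context: For relations on $Q$: $\mathscr{R}(q)=\{q'\mid q\,\mathscr{R}\,q'\}$, $\mathscr{R}(Y)=\bigcup_{q\in Y}\mathscr{R}(q)$, $\mathscr{R}^{-1}=\{(y,x)\mid(x,y)\in\mathscr{R}\}$, $\mathscr{S}\circ\mathscr{R}=\{(x,y)\mid y\in\mathscr{S}(\mathscr{R}(x))\}$. A preorder is a reflexive transitive relation; $[q]_{\mathscr{R}}=\{q'\mid q\,\mathscr{R}\,q'\wedge q'\,\mathscr{R}\,q\}$. A relation $\mathscr{S}$ is a simulation if $\mathscr{S}\circ\rightarrow^{-1}\subseteq\rightarrow^{-1}\circ\mathscr{S}$ (equivalently: $q_1\,\mathscr{S}\,q_2$ and $q_1\rightarrow q_1'$ imply some $q_2'$ with $q_2\rightarrow q_2'$ and $q_1'\,\mathscr{S}\,q_2'$). A transition $q\rightarrow q'$ is $\mathscr{R}$-maximal, written $q\rightarrow_{\mathscr{R}}q'$, if for all $q''$, ($q\rightarrow q''$ and $q'\,\mathscr{R}\,q''$) implies $q''\in[q']_{\mathscr{R}}$. The coarsest equivalence relation $\mathscr{P}$ in the hypothesis exists (it contains all other equivalence relations with the same two properties). *)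

From mathcomp Require Import all_boot.
Set Implicit Arguments. Unset Strict Implicit. Unset Printing Implicit Defensive.

Definition hrel (Q : Type) := Q -> Q -> Prop.

Section Rels.
Variable Q : Type.
Implicit Types (R S : hrel Q) (Y : Q -> Prop).

Definition img1 R (q : Q) : Q -> Prop := fun q' => R q q'.
Definition img R Y : Q -> Prop := fun q' => exists q, Y q /\ R q q'.
Definition rinv R : hrel Q := fun y x => R x y.
(* S o R = {(x,y) | y in S(R(x))} *)
Definition rcomp S R : hrel Q := fun x y => exists z, R x z /\ S z y.
Definition rincl R S := forall x y, R x y -> S x y.
Definition rdiff R S : hrel Q := fun x y => R x y /\ ~ S x y.
Definition is_preorder R := (forall x, R x x) /\ (forall x y z, R x y -> R y z -> R x z).
Definition is_equiv R :=
  (forall x, R x x) /\ (forall x y, R x y -> R y x) /\ (forall x y z, R x y -> R y z -> R x z).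
Definition blk R (q : Q) : Q -> Prop := fun q' => R q q' /\ R q' q.

Variable trans : hrel Q.

Definition simulation S := rincl (rcomp S (rinv trans)) (rcomp (rinv trans) S).
Definition maxtrans R : hrel Q := fun q q' =>
  trans q q' /\ forall q'', trans q q'' -> R q' q'' -> blk R q' q''.
Definition Rstable R V :=
  rincl V R /\ is_preorder V /\ rincl (rcomp V (rinv trans)) (rcomp (rinv trans) R).

Definition NotRel U R : hrel Q := rdiff U R.

Definition NotRel' U R P : hrel Q := fun c' d' =>
  exists b c d, trans c b /\ R c d /\
    img (rinv trans) (img1 (NotRel U R) b) d /\
    ~ img (rinv trans) (img1 R b) d /\
    blk P c c' /\ blk P d d'.

Definition Vrel U R P : hrel Q := rdiff R (NotRel' U R P).

Definition Xrel U R : hrel Q := fun c d =>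
  exists b, maxtrans R c b /\ R c d /\
    img (rinv (maxtrans R)) (img1 (NotRel U R) b) d /\
    ~ img (rinv (maxtrans R)) (img1 R b) d.
End Rels.

From mathcomp Require Import all_boot boolp.

Set Implicit Arguments.
Unset Strict Implicit.
Unset Printing Implicit Defensive.

(* Idea: write [matches T x y] when every move x -> x' is answered by a move
   y -> y' with T x' y'.  Since P-related states match each other's moves up
   to R, a witness of NotRel' transports along P-blocks, so NotRel' is exactly
   the set of pairs of R at which some move is not matched up to R; hence V is
   the set of pairs of R that match all moves up to R.  Each property of V is
   then a one-step argument: simulations inside R match moves, R-matching
   composes along R, and the symmetric kernel of V is an R-stable equivalence,
   hence below the coarsest one, P.  Finiteness is used only to push a move up
   to an R-maximal one, which turns this description of NotRel' into X. *)

Section Matching.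
Variables (Q : Type) (trans : hrel Q).

Definition matches (T : hrel Q) (x y : Q) :=
  forall x', trans x x' -> exists2 y', trans y y' & T x' y'.

Lemma transferP (S T : hrel Q) :
  rincl (rcomp S (rinv trans)) (rcomp (rinv trans) T) <->
  (forall x y, S x y -> matches T x y).
Proof.
split=> [ST x y Sxy x' xx' | ST x' y [x [xx' Sxy]]].
  by have [y' [Tx'y' yy']] := ST x' y (ex_intro _ x (conj xx' Sxy)); exists y'.
by have [y' yy' Tx'y'] := ST x y Sxy x' xx'; exists y'.
Qed.

Lemma matches_sub (S T : hrel Q) x y : rincl S T -> matches S x y -> matches T x y.
Proof. by move=> ST mS x' xx'; have [y' yy' /ST] := mS x' xx'; exists y'. Qed.

Lemma matches_comp (S T : hrel Q) x y z :
  matches S x y -> matches T y z -> matches (rcomp T S) x z.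
Proof.
move=> mS mT x' xx'; have [y' yy' Sx'y'] := mS x' xx'.
by have [z' zz' Ty'z'] := mT y' yy'; exists z' => //; exists y'.
Qed.

Lemma not_matches (T : hrel Q) x y : ~ matches T x y ->
  exists2 x', trans x x' & forall y', trans y y' -> ~ T x' y'.
Proof.
move=> nm; apply: contrapT => nx; apply: nm => x' xx'.
apply: contrapT => ny; apply: nx; exists x' => // y' yy' Tx'y'.
by apply: ny; exists y'.
Qed.

Lemma preorder_kernel_equiv (S : hrel Q) :
  is_preorder S -> is_equiv (fun x y => S x y /\ S y x).
Proof.
case=> Srefl Strans; split; first by move=> x; split.
split; first by move=> x y [].
by move=> x y z [Sxy Syx] [Syz Szy]; split; [exact: Strans Syz | exact: Strans Syx].
Qed.

End Matching.

Section Maximal.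
Variables (Q : finType) (R : hrel Q).
Hypothesis hR : is_preorder R.

(* Maximize the number of R-predecessors: a proper R-successor has strictly more. *)
Lemma preorder_max_above (S : Q -> Prop) m : S m ->
  exists m', [/\ S m', R m m' & forall s, S s -> R m' s -> R s m'].
Proof.
have [Rrefl Rtrans] := hR; pose below x := [pred y | `[< R y x >]].
pose candidate s := `[< S s >] && `[< R m s >].
move=> Sm; have Sm0 : candidate m by rewrite /candidate !asboolT.
case: (arg_maxnP (fun s => #|below s|) Sm0) => m' /andP[/asboolP Sm' /asboolP Rmm'] m'max.
exists m'; split=> // s Ss Rm's; apply: contrapT => nRsm'.
have: #|below s| <= #|below m'| by apply: m'max; rewrite /candidate !asboolT //; exact: Rtrans Rm's.
apply/negP; rewrite -ltnNge; apply: proper_card; apply/properP; split.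
  by apply/subsetP => y /asboolP Rym'; apply/asboolP; exact: Rtrans Rm's.
by exists s; [exact/asboolP/Rrefl | apply/asboolP].
Qed.

Lemma maxtrans_above (trans : hrel Q) d q :
  trans d q -> exists2 q', maxtrans trans R d q' & R q q'.
Proof.
move=> dq; have [q' [[dq' Rqq'] _ q'max]] :=
  @preorder_max_above (fun s => trans d s /\ R q s) q (conj dq (hR.1 q)).
exists q' => //; split=> // q'' dq'' Rq'q''; split=> //.
by apply: q'max => //; split=> //; exact: hR.2 Rqq' Rq'q''.
Qed.

End Maximal.

Section Refinement.
Variables (Q : finType) (trans U R P : hrel Q).
Hypotheses (hR : is_preorder R) (hRU : rincl R U).
Hypothesis U_trans : forall x y z, U x y -> U y z -> U x z.
Hypothesis R_matches_U : forall x y, R x y -> matches trans U x y.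
Hypotheses (hP : is_equiv P) (hPR : rincl P R).
Hypothesis P_matches_R : forall x y, P x y -> matches trans R x y.
Hypothesis P_coarsest : forall E : hrel Q, is_equiv E -> rincl E R ->
  (forall x y, E x y -> matches trans R x y) -> rincl E P.

Local Notation V := (Vrel trans U R P).

Lemma NotRel'P c d : NotRel' trans U R P c d <-> R c d /\ ~ matches trans R c d.
Proof.
have [_ Rtrans] := hR; have [Prefl _] := hP; split.
  move=> [b [c0 [d0 [c0b [Rc0d0 [_ [nod0 [[Pc0c Pcc0] [Pd0d Pdd0]]]]]]]]].
  split; first exact: Rtrans (hPR Pcc0) (Rtrans _ _ _ Rc0d0 (hPR Pd0d)).
  move=> m; have [b1 cb1 Rbb1] := P_matches_R Pc0c c0b.
  have [w dw Rb1w] := m b1 cb1; have [w0 d0w0 Rww0] := P_matches_R Pdd0 dw.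
  by apply: nod0; exists w0; split=> //; exact: Rtrans Rbb1 (Rtrans _ _ _ Rb1w Rww0).
move=> [Rcd nm]; have [b cb nob] := not_matches nm.
have [w dw Ubw] := R_matches_U Rcd cb.
exists b, c, d; do 2!split=> //; split.
  by exists w; split=> //; split=> //; exact: nob.
split; first by move=> [q [Rbq dq]]; exact: nob dq Rbq.
by split; split; apply: Prefl.
Qed.

Lemma XrelP c d : Xrel trans U R c d <-> R c d /\ ~ matches trans R c d.
Proof.
have [_ Rtrans] := hR; split.
  move=> [b [[cb _] [Rcd [_ nomax]]]]; split=> // m.
  have [w dw Rbw] := m b cb; have [q dq Rwq] := maxtrans_above hR dw.
  by apply: nomax; exists q; split=> //; exact: Rtrans Rbw Rwq.
move=> [Rcd nm]; have [b0 cb0 nob0] := not_matches nm.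
have [b cb Rb0b] := maxtrans_above hR cb0.
have nob q : trans d q -> ~ R b q by move=> dq Rbq; exact: nob0 dq (Rtrans _ _ _ Rb0b Rbq).
have [w dw Ubw] := R_matches_U Rcd cb.1; have [q dq Rwq] := maxtrans_above hR dw.
exists b; do 2!split=> //; split.
  by exists q; split=> //; split; [exact: U_trans Ubw (hRU Rwq) | exact: nob dq.1].
by move=> [q' [Rbq' dq']]; exact: nob dq'.1 Rbq'.
Qed.

Lemma VrelP x y : V x y <-> R x y /\ matches trans R x y.
Proof.
rewrite /V /Vrel /rdiff NotRel'P; split=> [[Rxy nN] | [Rxy m]]; split=> //.
  by apply: contrapT => nm; exact: nN.
by move=> [_ nm]; exact: nm m.
Qed.

Lemma Vrel_preorder : is_preorder V.
Proof.
have [Rrefl Rtrans] := hR; split=> [x | x y z /VrelP[Rxy mxy] /VrelP[Ryz myz]].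
  by apply/VrelP; split=> // x' xx'; exists x'; last exact: Rrefl.
apply/VrelP; split; first exact: Rtrans Ryz.
by apply: matches_sub (matches_comp mxy myz) => a b [w [Raw Rwb]]; exact: Rtrans Rwb.
Qed.

Lemma sub_Vrel (S : hrel Q) :
  (forall x y, S x y -> matches trans S x y) -> rincl S R -> rincl S V.
Proof.
move=> mS SR x y Sxy; apply/VrelP.
by split; [exact: SR | exact: matches_sub SR (mS _ _ Sxy)].
Qed.

Lemma Vrel_transfer : rincl (rcomp V (rinv trans)) (rcomp (rinv trans) R).
Proof. by apply/transferP => x y /VrelP[]. Qed.

Lemma blk_Vrel q x : blk V q x <-> blk P q x.
Proof.
have Vkernel_sub_P : rincl (fun a b => V a b /\ V b a) P.
  apply: P_coarsest; first exact: preorder_kernel_equiv Vrel_preorder.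
    by move=> a b [/VrelP[]].
  by move=> a b [/VrelP[]].
have P_sub_V a b : P a b -> V a b.
  by move=> Pab; apply/VrelP; split; [exact: hPR | exact: P_matches_R].
split=> [[Vqx Vxq] | [Pqx Pxq]].
  by split; apply: Vkernel_sub_P.
by split; apply: P_sub_V.
Qed.

End Refinement.

Theorem theorem1 (Q : finType) (trans U R P : hrel Q)
  (hU : is_preorder U) (hR : is_preorder R) (hRU : rincl R U)
  (hRsim : rincl (rcomp R (rinv trans)) (rcomp (rinv trans) U))
  (hPeq : is_equiv P) (hPR : rincl P R)
  (hPsim : rincl (rcomp P (rinv trans)) (rcomp (rinv trans) R))
  (hPmax : forall E : hrel Q, is_equiv E -> rincl E R ->
             rincl (rcomp E (rinv trans)) (rcomp (rinv trans) R) -> rincl E P) :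
  (forall c d, NotRel' trans U R P c d <-> Xrel trans U R c d)
  /\ (forall S : hrel Q, simulation trans S -> rincl S R -> rincl S (Vrel trans U R P))
  /\ rincl (rcomp (Vrel trans U R P) (rinv trans)) (rcomp (rinv trans) R)
  /\ is_preorder (Vrel trans U R P)
  /\ Rstable trans R (Vrel trans U R P)
  /\ (forall q, exists q', forall x, blk (Vrel trans U R P) q x <-> blk P q' x)
  /\ (forall q, exists q', forall x, blk P q x <-> blk (Vrel trans U R P) q' x).
Proof.
have R_matches_U := (transferP _ _ _).1 hRsim.
have P_matches_R := (transferP _ _ _).1 hPsim.
have P_coarsest (E : hrel Q) : is_equiv E -> rincl E R ->
    (forall x y, E x y -> matches trans R x y) -> rincl E P.
  by move=> hE hER /transferP; exact: hPmax.
have V_transfer := Vrel_transfer hR R_matches_U hPeq hPR P_matches_R.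
have V_preorder := Vrel_preorder hR R_matches_U hPeq hPR P_matches_R.
have blkE := blk_Vrel hR R_matches_U hPeq hPR P_matches_R P_coarsest.
split=> [c d | ].
  rewrite (NotRel'P hR R_matches_U hPeq hPR P_matches_R).
  by rewrite (XrelP hR hRU hU.2 R_matches_U).
split=> [S /transferP | ]; first exact: (sub_Vrel hR R_matches_U hPeq hPR P_matches_R).
do 3!split=> //; first by split=> // x y [].
by split=> q; exists q => x; rewrite blkE.
Qed.
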